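(* Let $a_1,a_2,a_3,a_4$ be nonzero integers. There is a constant $C$ (depending at most on $a_1,\dots,a_4$) such that for every $n$ and every Sidon set $X\subseteq\{1,\dots,n\}$, the number of $4$-tuples $(x_1,x_2,x_3,x_4)\in X^4$ with $a_1x_1+a_2x_2+a_3x_3+a_4x_4=0$ is at most $Cn$.
   Context: A set $X$ of integers is a Sidon set if it has no nontrivial solution to $x_1+x_2=x_3+x_4$ with $x_i\in X$, where a solution is trivial if $(x_1,x_2)=(x_3,x_4)$ or $(x_1,x_2)=(x_4,x_3)$. *)

From mathcomp Require Import all_boot all_order all_algebra.
Set Implicit Arguments. Unset Strict Implicit. Unset Printing Implicit Defensive.
Import Order.TTheory GRing.Theory Num.Theory.

(* A finite set of positive integers is represented by a duplicate-free
   sequence of naturals. *)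
Definition sidon (X : seq nat) : Prop :=
  forall x1 x2 x3 x4, x1 \in X -> x2 \in X -> x3 \in X -> x4 \in X ->
    (x1 + x2 = x3 + x4)%N ->
    (x1 = x3 /\ x2 = x4) \/ (x1 = x4 /\ x2 = x3).

Definition nsol (a1 a2 a3 a4 : int) (X : seq nat) : nat :=
  size [seq t <- (flatten [seq flatten [seq [seq ((x1, x2), (x3, x4)) | x3 <- X, x4 <- X] | x2 <- X] | x1 <- X])
       | let: ((x1, x2), (x3, x4)) := t in
         (a1 * x1%:Z + a2 * x2%:Z + a3 * x3%:Z + a4 * x4%:Z == 0)%R].

From mathcomp Require Import all_boot all_order all_algebra.
From mathcomp Require Import zify.
Import Order.TTheory GRing.Theory Num.Theory.

Set Implicit Arguments.
Unset Strict Implicit.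
Unset Printing Implicit Defensive.

(* Over X^2, let A and B be the multisets of values of a1 x1 + a2 x2 and of
   -(a3 x3 + a4 x4).  The solutions are the coincidences between A and B, so
   AM-GM on every fibre (Cauchy-Schwarz) bounds twice their number by the
   self-coincidences of A plus those of B.  For a Sidon set, a self-coincidence
   a x1 + b x2 = a y1 + b y2 with x1 <> y1 fixes the nonzero difference
   y2 - x2 = a (x1 - y1) / b, which has at most one representation, so each
   multiset has at most 2|X|^2 self-coincidences.  Distinct nonzero differences
   also give |X|^2 <= |X| + 2n, hence at most 2|X|^2 <= 6n solutions. *)

Section Collisions.
Variable T : eqType.
Implicit Types (s A B V : seq T).

Lemma count_le1 s (P : pred T) :
  uniq s -> {in s &, forall x y, P x -> P y -> x = y} -> count P s <= 1.
Proof.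
move=> s_uniq P_uniq; rewrite -size_filter.
case E: (filter P s) => [|x r] //; rewrite -E.
have: x \in filter P s by rewrite E mem_head.
rewrite mem_filter => /andP[Px xs].
apply: (@uniq_leq_size _ _ [:: x]); first exact: filter_uniq.
move=> y; rewrite mem_filter inE => /andP[Py ys].
by apply/eqP; apply: P_uniq.
Qed.

Lemma sum_count_mem V s (F : T -> nat) :
  uniq V -> {subset s <= V} ->
  \sum_(x <- s) F x = \sum_(v <- V) count_mem v s * F v.
Proof.
move=> V_uniq; elim: s => [|x s IHs] sV; first by rewrite big_nil big1.
rewrite big_cons IHs => [|y ys]; last by apply: sV; rewrite inE ys orbT.
under [RHS]eq_bigr => v _ do rewrite /= mulnDl.
rewrite big_split /= [X in _ = X + _](bigD1_seq x) ?sV ?mem_head //= eqxx mul1n.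
by rewrite [X in _ = _ + X + _]big1 ?addn0 // => v; rewrite eq_sym => /negbTE ->.
Qed.

Definition collisions A B := \sum_(v <- A) count_mem v B.

Lemma twice_collisions_le A B :
  2 * collisions A B <= collisions A A + collisions B B.
Proof.
have V_uniq := undup_uniq (A ++ B).
have AV : {subset A <= undup (A ++ B)} by move=> v vA; rewrite mem_undup mem_cat vA.
have BV : {subset B <= undup (A ++ B)} by move=> v vB; rewrite mem_undup mem_cat vB orbT.
rewrite /collisions (sum_count_mem _ V_uniq AV) (sum_count_mem _ V_uniq AV).
rewrite (sum_count_mem _ V_uniq BV) big_distrr -big_split /=.
apply: leq_sum => v _.
by have [+ _] := nat_Cauchy (count_mem v A) (count_mem v B); rewrite !mulnn.
Qed.

End Collisions.

Definition pairs (T : Type) (X : seq T) := [seq (x, y) | x <- X, y <- X].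

Lemma count_pairs (T : Type) (X : seq T) (P : pred (T * T)) :
  count P (pairs X) = \sum_(x <- X) count (fun y => P (x, y)) X.
Proof.
by rewrite count_flatten sumnE !big_map; apply: eq_bigr => x _; rewrite count_map.
Qed.

Lemma pairs_uniq (T : eqType) (X : seq T) : uniq X -> uniq (pairs X).
Proof. by move=> X_uniq; apply: allpairs_uniq => // -[? ?] [? ?]. Qed.

Lemma mem_pairs (T : eqType) (X : seq T) x y :
  ((x, y) \in pairs X) = (x \in X) && (y \in X).
Proof. by apply/allpairsP/andP => [[[? ?] [? ? [-> ->]]] | [? ?]] //; exists (x, y). Qed.

Lemma size_pairs (T : Type) (X : seq T) : size (pairs X) = size X ^ 2.
Proof. by rewrite size_allpairs mulnn. Qed.

Lemma sidon_diff_inj X x y x' y' :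
  sidon X -> x \in X -> y \in X -> x' \in X -> y' \in X ->
  x != y -> x + y' = x' + y -> x = x' /\ y = y'.
Proof.
move=> sX xX yX x'X y'X /eqP x_neq_y e.
by case: (sX _ _ _ _ xX y'X x'X yX e) => [[-> ->] | [/x_neq_y]].
Qed.

Definition lin2 (a b : int) (p : nat * nat) : int := (a * p.1%:Z + b * p.2%:Z)%R.

Lemma nsolE a1 a2 a3 a4 X :
  nsol a1 a2 a3 a4 X =
  collisions [seq lin2 a1 a2 p | p <- pairs X] [seq lin2 (- a3) (- a4) q | q <- pairs X].
Proof.
rewrite /nsol size_filter /collisions big_map big_allpairs.
rewrite count_flatten sumnE !big_map /=.
apply: eq_bigr => x1 _; rewrite count_flatten sumnE !big_map; apply: eq_bigr => x2 _.
rewrite count_map count_pairs count_flatten sumnE !big_map; apply: eq_bigr => x3 _.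
rewrite count_map; apply: eq_count => x4 /=.
by rewrite /lin2 /=; apply/eqP/eqP; lia.
Qed.

Section SidonCounting.
Variables (n : nat) (X : seq nat).
Hypothesis X_uniq : uniq X.
Hypothesis X_range : forall x, x \in X -> 1 <= x <= n.
Hypothesis X_sidon : sidon X.

Lemma size_sidon_le : size X <= n.
Proof.
rewrite -(size_iota 1 n); apply: uniq_leq_size => // x /X_range.
by rewrite mem_iota; lia.
Qed.

Lemma count_diag_pairs : count (fun p => p.1 == p.2) (pairs X) <= size X.
Proof.
rewrite count_pairs -sum1_size; apply: leq_sum => x _.
by apply: count_le1 => // y z _ _ /= /eqP <- /eqP <-.
Qed.

(* On [1, n] the shifted difference [x + n - y] is never truncated. *)
Lemma count_offdiag_pairs : count (fun p => p.1 != p.2) (pairs X) <= 2 * n.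
Proof.
pose diff p := p.1 + n - p.2.
rewrite -size_filter -(size_map diff) -(size_iota 0 (2 * n)).
apply: uniq_leq_size.
  rewrite map_inj_in_uniq ?filter_uniq ?pairs_uniq //.
  move=> [x y] [x' y']; rewrite !mem_filter !mem_pairs /diff /=.
  move=> /and3P[x_neq_y xX yX] /and3P[_ x'X y'X] e.
  have sum_eq : x + y' = x' + y by move: (X_range yX) (X_range y'X); lia.
  by have [-> ->] := sidon_diff_inj X_sidon xX yX x'X y'X x_neq_y sum_eq.
move=> _ /mapP[[x y] + ->]; rewrite mem_filter mem_pairs mem_iota /diff /=.
move=> /and3P[_ xX yX].
by move: (X_range xX) (X_range yX); lia.
Qed.

Lemma sidon_size_sq : size X ^ 2 <= size X + 2 * n.
Proof.
rewrite -size_pairs -(count_predC (fun p => p.1 == p.2)).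
exact: leq_add count_diag_pairs count_offdiag_pairs.
Qed.

Lemma count_collisions_diag (a b : int) x1 x2 :
  b != 0%R -> count (fun y2 => lin2 a b (x1, y2) == lin2 a b (x1, x2)) X <= 1.
Proof.
move=> b_neq0; apply: count_le1 => // y z _ _; rewrite /lin2 /=.
move=> /eqP/addrI ey /eqP/addrI ez.
by apply/eqP; rewrite -eqz_nat -(inj_eq (mulfI b_neq0)) ey ez.
Qed.

Lemma count_collisions_offdiag (a b : int) x1 y1 :
  a != 0%R -> b != 0%R -> x1 != y1 ->
  \sum_(x2 <- X) count (fun y2 => lin2 a b (y1, y2) == lin2 a b (x1, x2)) X <= 1.
Proof.
move=> a_neq0 b_neq0 x1_neq_y1.
rewrite -(count_pairs X (fun p => lin2 a b (y1, p.2) == lin2 a b (x1, p.1))).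
apply: count_le1; first exact: pairs_uniq.
move=> [x2 y2] [x2' y2']; rewrite !mem_pairs /lin2 /=.
move=> /andP[x2X y2X] /andP[x2'X y2'X] /eqP e /eqP e'.
have shift_neq0 : (a * (x1%:Z - y1%:Z) != 0)%R.
  by rewrite mulf_eq0 negb_or a_neq0 subr_eq0 eqz_nat.
have d : (b * (y2%:Z - x2%:Z) = a * (x1%:Z - y1%:Z))%R by lia.
have d' : (b * (y2'%:Z - x2'%:Z) = a * (x1%:Z - y1%:Z))%R by lia.
have y2_neq_x2 : y2 != x2.
  by apply: contraNneq shift_neq0 => y2_eq_x2; rewrite -d y2_eq_x2 subrr mulr0.
have sub_eq := mulfI b_neq0 (etrans d (esym d')).
have sum_eq : y2 + x2' = y2' + x2 by lia.
by have [-> ->] := sidon_diff_inj X_sidon y2X x2X y2'X x2'X y2_neq_x2 sum_eq.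
Qed.

Lemma sidon_self_collisions (a b : int) : a != 0%R -> b != 0%R ->
  collisions [seq lin2 a b p | p <- pairs X] [seq lin2 a b p | p <- pairs X]
  <= 2 * size X ^ 2.
Proof.
move=> a_neq0 b_neq0; set A := [seq lin2 a b p | p <- pairs X].
have -> : collisions A A = \sum_(x1 <- X) \sum_(y1 <- X) \sum_(x2 <- X)
    count (fun y2 => lin2 a b (y1, y2) == lin2 a b (x1, x2)) X.
  rewrite /collisions big_map big_allpairs; apply: eq_bigr => x1 _.
  by under eq_bigr => x2 _ do rewrite count_map count_pairs; rewrite exchange_big.
have row_bound x1 : x1 \in X -> \sum_(y1 <- X) \sum_(x2 <- X)
    count (fun y2 => lin2 a b (y1, y2) == lin2 a b (x1, x2)) X <= size X + size X.
  move=> x1X; rewrite (bigD1_seq x1) //=; apply: leq_add.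
    rewrite -sum1_size; apply: leq_sum => x2 _; exact: count_collisions_diag.
  rewrite -[X in _ <= X]sum1_size [X in _ <= X](bigID (fun y1 => y1 != x1)) /=.
  apply: leq_trans (leq_addr _ _); apply: leq_sum => y1 y1_neq_x1.
  by apply: count_collisions_offdiag; rewrite // eq_sym.
rewrite big_seq; apply: (leq_trans (leq_sum _ row_bound)).
by rewrite -big_seq big_const_seq count_predT iter_addn_0 addnn -mul2n -mulnA mulnn.
Qed.

End SidonCounting.

Theorem lemma1p18 (a1 a2 a3 a4 : int) :
  a1 != 0%R -> a2 != 0%R -> a3 != 0%R -> a4 != 0%R ->
  exists C : nat, forall (n : nat) (X : seq nat),
    uniq X -> (forall x, x \in X -> (1 <= x <= n)%N) -> sidon X ->
    (nsol a1 a2 a3 a4 X <= C * n)%N.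
Proof.
move=> a1_neq0 a2_neq0 a3_neq0 a4_neq0; exists 6 => n X X_uniq X_range X_sidon.
set A := [seq lin2 a1 a2 p | p <- pairs X].
set B := [seq lin2 (- a3) (- a4) q | q <- pairs X].
have A_bound : collisions A A <= 2 * size X ^ 2 by exact: sidon_self_collisions.
have B_bound : collisions B B <= 2 * size X ^ 2.
  by apply: sidon_self_collisions; rewrite ?oppr_eq0.
have := twice_collisions_le A B; rewrite -nsolE.
have := sidon_size_sq X_uniq X_range X_sidon.
have := size_sidon_le X_uniq X_range.
lia.
Qed.
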